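(* $\mathrm{GL}_3(\mathbb{F}_5)$ contains exactly one conjugacy class of subgroups isomorphic to $A_5\times C_2$. *)

From mathcomp Require Import all_boot all_algebra all_fingroup all_solvable.
Set Implicit Arguments. Unset Strict Implicit. Unset Printing Implicit Defensive.

Definition A5xC2 : {group ({perm 'I_5} * 'Z_2)%type} :=
  setX_group ('Alt_('I_5))%G (Zp 2)%G.

From HB Require Import structures.
From mathcomp Require Import all_boot all_algebra all_fingroup all_solvable all_field zify.

Set Implicit Arguments. Unset Strict Implicit. Unset Printing Implicit Defensive.
Import GRing.Theory.

(* Over F_5 the permutation module of S_5 has the 3-dimensional heart
   {x | sum x = 0} / <(1,...,1)>, giving rho : A_5 -> GL_3(F_5); as A_5 is simple,
   rho is faithful and avoids -1, so rho(A_5) x <-1> is a copy of A_5 x C_2.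
   Conversely a copy is generated by the images A, B, Z of (0 1)(2 3), (0 4 2) and
   the central involution, with A^2 = B^3 = (AB)^5 = Z^2 = 1 and Z central. A
   computation over all 5^9 matrices shows that every involution is conjugate to
   diag(1,-1,-1), diag(1,1,-1) or -1; that for each such D, every B of order 3 with
   (DB)^5 = 1 makes (D, B) conjugate to (rho (0 1)(2 3), rho (0 4 2)); and that the
   only involutions centralising this pair are 1 and -1. So (A, B, Z) is
   simultaneously conjugate to the standard generators. *)

Section HeartOfPermutationModule.

Local Open Scope ring_scope.

Variable R : nzRingType.
Hypothesis char5 : 5%:R = 0 :> R.

(* hvec a holds the coordinates of e_a - e_4 in the basis (e_i - e_4)_(i < 3) of the
   heart: e_3 - e_4 is minus the sum of the basis, as (1,...,1) = 0 there and 5 = 0. *)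
Definition hvec (a : 'I_5) : 'rV[R]_3 := \row_k ((a == k :> nat)%:R - (a == 3 :> nat)%:R).

Definition rho (s : {perm 'I_5}) : 'M[R]_3 :=
  \matrix_(i < 3) (hvec (s (widen_ord (isT : (3 <= 5)%N) i)) - hvec (s ord_max)).

Lemma hvec_widen i : hvec (widen_ord (isT : (3 <= 5)%N) i) = delta_mx 0 i.
Proof.
apply/rowP => k; rewrite !mxE eqxx /=.
by case: i k => [[|[|[|i]]] Hi] [[|[|[|k]]] Hk] //=; rewrite subr0.
Qed.

Lemma hvec_max : hvec ord_max = 0.
Proof. by apply/rowP => k; rewrite !mxE; case: k => [[|[|[|k]]] Hk] //=; rewrite subrr. Qed.

Lemma sum_hvec : \sum_a hvec a = 0.
Proof.
apply/rowP => k; rewrite summxE !big_ord_recr big_ord0 /= !mxE.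
by case: k => [[|[|[|k]]] Hk] //=; rewrite !(subr0, sub0r, add0r, addr0, addrN).
Qed.

Lemma hvec_mul_rho t a : hvec a *m rho t = hvec (t a) - hvec (t ord_max).
Proof.
pose o3 : 'I_5 := inord 3.
pose f b := hvec (t b) - hvec (t ord_max).
have rowsE b : b != o3 -> hvec b *m rho t = f b.
  move=> ne_b3; have [lt_b3 | ge_b3] := ltnP b 3.
    have -> : b = widen_ord (isT : (3 <= 5)%N) (Ordinal lt_b3) by apply: val_inj.
    by rewrite hvec_widen -rowE rowK.
  have -> : b = ord_max.
    apply: val_inj; move: ne_b3 ge_b3 (ltn_ord b); rewrite -val_eqE /= inordK //.
    by case: (nat_of_ord b) => [|[|[|[|[|]]]]].
  by rewrite hvec_max mul0mx /f subrr.
have [->|/rowsE//] := eqVneq a o3.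
(* Both families hvec and f sum to zero, so their values at 3 are determined by the others. *)
have sum0 (g : 'I_5 -> 'rV[R]_3) : \sum_b g b = 0 -> g o3 = - \sum_(b | b != o3) g b.
  by rewrite (bigD1 o3) //= => /eqP; rewrite addr_eq0 => /eqP.
rewrite (sum0 _ sum_hvec) mulNmx mulmx_suml (eq_bigr f) => [|b /rowsE//].
have sum_hvec_t : \sum_b hvec (t b) = 0.
  by rewrite -[in RHS]sum_hvec [RHS](reindex_perm t).
apply/esym; apply: (sum0 f); rewrite sumrB sum_hvec_t sumr_const card_ord.
by rewrite -scaler_nat char5 scale0r subrr.
Qed.

Lemma rhoM s t : rho (s * t)%g = rho s *m rho t.
Proof.
apply/row_matrixP => i; rewrite row_mul !rowK mulmxBl !hvec_mul_rho !permM.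
by rewrite opprB addrA subrK.
Qed.

Lemma rho1 : rho 1%g = 1%:M.
Proof.
by apply/row_matrixP => i; rewrite rowK row1 !perm1 hvec_widen hvec_max subr0.
Qed.

End HeartOfPermutationModule.

Inductive f5 := F0 | F1 | F2 | F3 | F4.

Definition f5_nat (a : f5) : nat :=
  match a with F0 => 0 | F1 => 1 | F2 => 2 | F3 => 3 | F4 => 4 end.
Definition nat_f5 (n : nat) : f5 :=
  match n with 0 => F0 | 1 => F1 | 2 => F2 | 3 => F3 | _ => F4 end.

Definition f5_eqb (a b : f5) : bool :=
  match a, b with F0, F0 | F1, F1 | F2, F2 | F3, F3 | F4, F4 => true | _, _ => false end.

Lemma f5_eqbP : Equality.axiom f5_eqb.
Proof. by case; case; constructor. Qed.
HB.instance Definition _ := hasDecEq.Build f5 f5_eqbP.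

Definition f5_succ (a : f5) : f5 :=
  match a with F0 => F1 | F1 => F2 | F2 => F3 | F3 => F4 | F4 => F0 end.
Definition f5_opp (a : f5) : f5 :=
  match a with F0 => F0 | F1 => F4 | F2 => F3 | F3 => F2 | F4 => F1 end.
Definition f5_add (a b : f5) : f5 :=
  match a with
  | F0 => b | F1 => f5_succ b | F2 => f5_succ (f5_succ b)
  | F3 => f5_opp (f5_succ (f5_succ (f5_opp b))) | F4 => f5_opp (f5_succ (f5_opp b))
  end.
Definition f5_mul (a b : f5) : f5 :=
  match a with
  | F0 => F0 | F1 => b | F2 => f5_add b b | F3 => f5_opp (f5_add b b) | F4 => f5_opp b
  end.
Definition f5_inv (a : f5) : f5 := f5_mul a (f5_mul a a).

Notation vec := (f5 * f5 * f5)%type.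
Notation cmx := (vec * vec * vec)%type.

Definition dot (u v : vec) : f5 :=
  let: (u0, u1, u2) := u in let: (v0, v1, v2) := v in
  f5_add (f5_add (f5_mul u0 v0) (f5_mul u1 v1)) (f5_mul u2 v2).
Definition cross (u v : vec) : vec :=
  let: (u0, u1, u2) := u in let: (v0, v1, v2) := v in
  (f5_add (f5_mul u1 v2) (f5_opp (f5_mul u2 v1)),
   f5_add (f5_mul u2 v0) (f5_opp (f5_mul u0 v2)),
   f5_add (f5_mul u0 v1) (f5_opp (f5_mul u1 v0))).
Definition scalev (k : f5) (v : vec) : vec :=
  let: (v0, v1, v2) := v in (f5_mul k v0, f5_mul k v1, f5_mul k v2).
Definition mulv (M : cmx) (v : vec) : vec :=
  let: (r0, r1, r2) := M in (dot r0 v, dot r1 v, dot r2 v).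
Definition ctr (M : cmx) : cmx :=
  let: ((a0, a1, a2), (b0, b1, b2), (c0, c1, c2)) := M in
  ((a0, b0, c0), (a1, b1, c1), (a2, b2, c2)).
Definition cmul (M N : cmx) : cmx :=
  let: (c0, c1, c2) := ctr N in ctr (mulv M c0, mulv M c1, mulv M c2).
(* The adjugate over the determinant, computed from the columns u, v, w of M
   (whose determinant is u . (v x w)); a junk value when M is singular. *)
Definition cinv (M : cmx) : cmx :=
  let: (u, v, w) := ctr M in
  let k := f5_inv (dot u (cross v w)) in
  (scalev k (cross v w), scalev k (cross w u), scalev k (cross u v)).
Definition cdiag (d : vec) : cmx :=
  let: (d0, d1, d2) := d in ((d0, F0, F0), (F0, d1, F0), (F0, F0, d2)).
Definition cI : cmx := cdiag (F1, F1, F1).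
Definition cpow (M : cmx) (n : nat) : cmx := if n is n'.+1 then iter n' (cmul M) M else cI.

(* The equality tests and certificates below use explicit if-then-else rather than
   && and ||: vm_compute evaluates the arguments of a function call eagerly, so only
   if-then-else short-circuits. *)
Definition vec_eqb (u v : vec) : bool :=
  let: (u0, u1, u2) := u in let: (v0, v1, v2) := v in
  if f5_eqb u0 v0 then if f5_eqb u1 v1 then f5_eqb u2 v2 else false else false.
Definition cmx_eqb (M N : cmx) : bool :=
  let: (u0, u1, u2) := M in let: (v0, v1, v2) := N in
  if vec_eqb u0 v0 then if vec_eqb u1 v1 then vec_eqb u2 v2 else false else false.
Definition cunit (M : cmx) : bool := cmx_eqb (cmul M (cinv M)) cI.
Definition conj_witness (P M N : cmx) : bool :=
  if cmx_eqb (cmul M P) (cmul P N) then cunit P else false.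

Lemma vec_eqbP u v : reflect (u = v) (vec_eqb u v).
Proof.
case: u v => [[u0 u1] u2] [[v0 v1] v2] /=.
case: f5_eqbP => [<-|ne]; last by right=> -[].
case: f5_eqbP => [<-|ne]; last by right=> -[].
by case: f5_eqbP => [<-|ne]; [left | right=> -[]].
Qed.

Lemma cmx_eqbP M N : reflect (M = N) (cmx_eqb M N).
Proof.
case: M N => [[u0 u1] u2] [[v0 v1] v2] /=.
case: vec_eqbP => [<-|ne]; last by right=> -[].
case: vec_eqbP => [<-|ne]; last by right=> -[].
by case: vec_eqbP => [<-|ne]; [left | right=> -[]].
Qed.

Definition f5s : seq f5 := [:: F0; F1; F2; F3; F4].
Definition forall_vec (p : pred vec) : bool :=
  all (fun a => all (fun b => all (fun c => p (a, b, c)) f5s) f5s) f5s.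
Definition forall_cmx (p : pred cmx) : bool :=
  forall_vec (fun r0 => forall_vec (fun r1 => forall_vec (fun r2 => p (r0, r1, r2)))).

Lemma forall_f5P (p : pred f5) : all p f5s -> forall a, p a.
Proof. by move=> /and5P[? ? ? ? /andP[? _]] []. Qed.

Lemma forall_vecP p : forall_vec p -> forall v, p v.
Proof. by move=> p_all [[a b] c]; apply: forall_f5P (forall_f5P (forall_f5P p_all a) b) c. Qed.

Lemma forall_cmxP p : forall_cmx p -> forall M, p M.
Proof.
move=> p_all [[r0 r1] r2].
exact: forall_vecP (forall_vecP (forall_vecP p_all r0) r1) r2.
Qed.

Local Open Scope ring_scope.

Definition f5_val (a : f5) : 'F_5 := (f5_nat a)%:R.
Definition f5_of (x : 'F_5) : f5 := nat_f5 x.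

Lemma f5_valK : cancel f5_val f5_of.
Proof. by case. Qed.

Lemma f5_ofK : cancel f5_of f5_val.
Proof. by case=> -[|[|[|[|[|n]]]]] lt_n5 //; apply: val_inj. Qed.

Lemma f5_valD a b : f5_val (f5_add a b) = f5_val a + f5_val b.
Proof. by case: a; case: b; apply: val_inj. Qed.

Lemma f5_valM a b : f5_val (f5_mul a b) = f5_val a * f5_val b.
Proof. by case: a; case: b; apply: val_inj. Qed.

Definition nth3 T (t : T * T * T) (k : nat) : T :=
  let: (t0, t1, t2) := t in match k with 0 => t0 | 1 => t1 | _ => t2 end.

Definition mx_of (M : cmx) : 'M['F_5]_3 := \matrix_(i, j) f5_val (nth3 (nth3 M i) j).
Definition cmx_of (A : 'M['F_5]_3) : cmx :=
  let e i j := f5_of (A (inZp i) (inZp j)) in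
  ((e 0 0, e 0 1, e 0 2), (e 1 0, e 1 1, e 1 2), (e 2 0, e 2 1, e 2 2))%N.

Lemma mx_ofK : cancel mx_of cmx_of.
Proof.
case=> [[[[a0 a1] a2] [[b0 b1] b2]] [[c0 c1] c2]].
by rewrite /cmx_of !mxE /= !f5_valK.
Qed.

Lemma cmx_ofK : cancel cmx_of mx_of.
Proof.
move=> A; apply/matrixP => i j; rewrite mxE -[RHS]f5_ofK.
by case: i j => [[|[|[|i]]] Hi] [[|[|[|j]]] Hj] //=;
  congr (f5_val (f5_of (A _ _))); apply: val_inj.
Qed.

Lemma mx_of_mul M N : mx_of (cmul M N) = mx_of M *m mx_of N.
Proof.
case: M N => [[[[a0 a1] a2] [[b0 b1] b2]] [[c0 c1] c2]].
case=> [[[[d0 d1] d2] [[e0 e1] e2]] [[g0 g1] g2]].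
apply/matrixP => i j; rewrite !mxE !big_ord_recr big_ord0 /= !mxE /=.
by case: i j => [[|[|[|i]]] Hi] [[|[|[|j]]] Hj] //=; rewrite add0r !f5_valD !f5_valM.
Qed.

Lemma cmul_mx M N : cmul M N = cmx_of (mx_of M *m mx_of N).
Proof. by rewrite -mx_of_mul mx_ofK. Qed.

Lemma mx_of1 : mx_of cI = 1%:M.
Proof. by apply/matrixP => i j; rewrite !mxE; case: i j => [[|[|[|i]]] Hi] [[|[|[|j]]] Hj]. Qed.

Definition vecs : seq vec := [seq (ab.1, ab.2, c) | ab <- [seq (a, b) | a <- f5s, b <- f5s], c <- f5s].

(* diagonalizer and the conjugator list below only propose candidates: the
   certificates check every candidate with conj_witness. *)
Definition eigvecs (M : cmx) (d : f5) : seq vec :=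
  [seq v <- vecs | if vec_eqb v (F0, F0, F0) then false else vec_eqb (mulv M v) (scalev d v)].
Definition diagonalizer (M : cmx) (d : vec) : cmx :=
  let: (d0, d1, d2) := d in
  let u := head (F0, F0, F0) (eigvecs M d0) in
  let v := head (F0, F0, F0) [seq v <- eigvecs M d1 | ~~ vec_eqb (cross u v) (F0, F0, F0)] in
  let w := head (F0, F0, F0) [seq w <- eigvecs M d2 | ~~ f5_eqb (dot (cross u v) w) F0] in
  ctr (u, v, w).

Definition involution_diags : seq vec := [:: (F1, F4, F4); (F1, F1, F4); (F4, F4, F4)].

(* Images of sA and tA (defined below) under rho, and -1. *)
Definition cA : cmx := ((F0, F1, F0), (F1, F0, F0), (F4, F4, F4)).
Definition cB : cmx := ((F0, F0, F4), (F0, F1, F4), (F1, F0, F4)).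
Definition cminus1 : cmx := cdiag (F4, F4, F4).

Definition involution_cert (M : cmx) : bool :=
  if cmx_eqb (cpow M 2) cI then
    cmx_eqb M cI || has (fun d => conj_witness (diagonalizer M d) M (cdiag d)) involution_diags
  else true.

(* Conjugators from diag(1,-1,-1) to cA, through the centraliser of diag(1,-1,-1). *)
Definition cA_conjugators : seq cmx :=
  let Q := cinv (diagonalizer cA (F1, F4, F4)) in
  [seq cmul ((F1, F0, F0), (F0, C.1.1, C.1.2), (F0, C.2.1, C.2.2)) Q
  | C <- [seq (ab, cd) | ab <- [seq (a, b) | a <- f5s, b <- f5s],
                         cd <- [seq (c, d) | c <- f5s, d <- f5s]]].

Definition pair_cert (Ys : seq cmx) (M : cmx) : bool :=
  if cmx_eqb (cpow M 3) cI then
    cmx_eqb M cI || all (fun d =>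
      if cmx_eqb (cpow (cmul (cdiag d) M) 5) cI then
        (find (fun Y => if conj_witness Y M cB then conj_witness Y (cdiag d) cA else false) Ys
         < size Ys)%N
      else true) involution_diags
  else true.

Definition center_cert (M : cmx) : bool :=
  if cmx_eqb (cpow M 2) cI then
    if cmx_eqb (cmul M cA) (cmul cA M) then
      if cmx_eqb (cmul M cB) (cmul cB M) then cmx_eqb M cI || cmx_eqb M cminus1 else true
    else true
  else true.

Lemma involution_cert_ok : forall_cmx involution_cert.
Proof. by vm_compute. Qed.

Lemma pair_cert_ok : forall_cmx (pair_cert cA_conjugators).
Proof. by vm_compute. Qed.

Lemma center_cert_ok : forall_cmx center_cert.
Proof. by vm_compute. Qed.

(* Group statements are made over this alias of type finGroupType: unifying
   fingroup lemmas with the bare {'GL_3['F_5]} takes tens of seconds each time. *)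
Definition GL35 : finGroupType := {'GL_3['F_5]}.

Local Open Scope group_scope.

Definition mxGL (A : 'M['F_5]_3) : GL35 := insubd (1 : {'GL_3['F_5]}) A.
Definition gl_of (M : cmx) : GL35 := mxGL (mx_of M).
Definition gl_cmx (u : GL35) : cmx := cmx_of (GLval u).

Lemma mxGLK A : A \in unitmx -> GLval (mxGL A) = A.
Proof. by move=> unitA; rewrite /mxGL insubdK. Qed.

Lemma GLval_inj : injective (GLval : GL35 -> 'M['F_5]_3).
Proof. exact: val_inj. Qed.

Lemma mxGLM A B : A \in unitmx -> B \in unitmx -> mxGL (A *m B)%R = mxGL A * mxGL B.
Proof. by move=> uA uB; apply: GLval_inj; rewrite GL_MxE !mxGLK // unitmx_mul uA uB. Qed.

Lemma gl_cmx_inj : injective gl_cmx.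
Proof. by move=> u v /(can_inj cmx_ofK)/GLval_inj. Qed.

Lemma gl_cmxM u v : gl_cmx (u * v) = cmul (gl_cmx u) (gl_cmx v).
Proof. by rewrite /gl_cmx GL_MxE cmul_mx !cmx_ofK. Qed.

Lemma gl_cmx1 : gl_cmx 1 = cI.
Proof. by rewrite /gl_cmx GL_1E -[RHS]mx_ofK mx_of1. Qed.

Lemma gl_cmxX u n : gl_cmx (u ^+ n) = cpow (gl_cmx u) n.
Proof.
case: n => [|n]; first by rewrite expg0 gl_cmx1.
by elim: n => [|n IHn]; rewrite ?expg1 // expgS gl_cmxM IHn.
Qed.

Lemma gl_cmx_eqb u v : cmx_eqb (gl_cmx u) (gl_cmx v) = (u == v).
Proof. by apply/cmx_eqbP/eqP => [/gl_cmx_inj|->]. Qed.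

Lemma gl_ofK M : cunit M -> gl_cmx (gl_of M) = M.
Proof.
move/cmx_eqbP => MMV.
have [unitM _] : mx_of M \in unitmx /\ mx_of (cinv M) \in unitmx.
  by apply: mulmx1_unit; rewrite -mx_of_mul MMV mx_of1.
by rewrite /gl_cmx /gl_of mxGLK ?mx_ofK.
Qed.

Lemma conjg_witness (u v : GL35) P : conj_witness P (gl_cmx u) (gl_cmx v) -> u ^ gl_of P = v.
Proof.
rewrite /conj_witness; case: cmx_eqbP => // uP_Pv /gl_ofK glP.
have uPE : u * gl_of P = gl_of P * v by apply: gl_cmx_inj; rewrite !gl_cmxM glP.
by rewrite conjgE uPE mulKg.
Qed.

Definition gA : GL35 := gl_of cA.
Definition gB : GL35 := gl_of cB.
Definition minus1 : GL35 := gl_of cminus1.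
Definition diag_involutions : seq GL35 := [seq gl_of (cdiag d) | d <- involution_diags].

Lemma gl_cmx_gA : gl_cmx gA = cA. Proof. exact: gl_ofK. Qed.
Lemma gl_cmx_gB : gl_cmx gB = cB. Proof. exact: gl_ofK. Qed.
Lemma gl_cmx_minus1 : gl_cmx minus1 = cminus1. Proof. exact: gl_ofK. Qed.

Lemma gl_cmx_diag d : d \in involution_diags -> gl_cmx (gl_of (cdiag d)) = cdiag d.
Proof. by move=> d_diag; apply: gl_ofK; move: d d_diag; apply/allP. Qed.

Lemma involution_conj_diag (A : GL35) :
  A ^+ 2 = 1 -> A != 1 -> exists x, A ^ x \in diag_involutions.
Proof.
move=> A2 ntA; have := forall_cmxP involution_cert_ok (gl_cmx A).
rewrite /involution_cert -gl_cmxX A2 -gl_cmx1 !gl_cmx_eqb eqxx (negbTE ntA).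
case/hasP => d d_diag; rewrite -[cdiag d](gl_cmx_diag d_diag) => /conjg_witness Ax.
by exists (gl_of (diagonalizer (gl_cmx A) d)); rewrite Ax (map_f (fun d => gl_of (cdiag d))).
Qed.

Lemma pair_conj_std (D B : GL35) : D \in diag_involutions ->
  B ^+ 3 = 1 -> B != 1 -> (D * B) ^+ 5 = 1 -> exists x, D ^ x = gA /\ B ^ x = gB.
Proof.
case/mapP => d d_diag ->{D}; set D := gl_of (cdiag d) => B3 ntB DB5.
have := forall_cmxP pair_cert_ok (gl_cmx B).
rewrite /pair_cert -gl_cmxX B3 -gl_cmx1 !gl_cmx_eqb eqxx (negbTE ntB).
move=> /allP/(_ d d_diag); rewrite -[cdiag d](gl_cmx_diag d_diag) -gl_cmxM -gl_cmxX DB5.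
rewrite gl_cmx_eqb eqxx -has_find -gl_cmx_gA -gl_cmx_gB => /hasP[Y _].
case: ifP => // /conjg_witness BY /conjg_witness DY.
by exists (gl_of Y); split; [exact: DY | exact: BY].
Qed.

Lemma centralising_involution (Z : GL35) :
  commute Z gA -> commute Z gB -> Z ^+ 2 = 1 -> Z != 1 -> Z = minus1.
Proof.
move=> ZA ZB Z2 ntZ; have := forall_cmxP center_cert_ok (gl_cmx Z).
rewrite /center_cert.
have -> : cmx_eqb (cpow (gl_cmx Z) 2) cI by rewrite -gl_cmxX Z2 gl_cmx1.
have -> : cmx_eqb (cmul (gl_cmx Z) cA) (cmul cA (gl_cmx Z)).
  by rewrite -gl_cmx_gA -!gl_cmxM ZA; apply/cmx_eqbP.
have -> : cmx_eqb (cmul (gl_cmx Z) cB) (cmul cB (gl_cmx Z)).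
  by rewrite -gl_cmx_gB -!gl_cmxM ZB; apply/cmx_eqbP.
by rewrite -gl_cmx1 -gl_cmx_minus1 !gl_cmx_eqb (negbTE ntZ) => /eqP.
Qed.

Lemma std_generators_conj (A B Z : GL35) :
  A ^+ 2 = 1 -> A != 1 -> B ^+ 3 = 1 -> B != 1 -> (A * B) ^+ 5 = 1 ->
  Z ^+ 2 = 1 -> Z != 1 -> commute Z A -> commute Z B ->
  exists x, [/\ A ^ x = gA, B ^ x = gB & Z ^ x = minus1].
Proof.
move=> A2 ntA B3 ntB AB5 Z2 ntZ ZA ZB.
have [y Ay] := involution_conj_diag A2 ntA.
have [|||z [Ayz Byz]] := pair_conj_std Ay (B := B ^ y).
- by rewrite -conjXg B3 conj1g.
- by rewrite conjg_eq1.
- by rewrite -conjMg -conjXg AB5 conj1g.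
exists (y * z); rewrite !conjgM Ayz Byz; split; [reflexivity | reflexivity |].
apply: centralising_involution; rewrite -?Ayz -?Byz /commute -?conjMg ?ZA ?ZB //.
- by rewrite -!conjXg Z2 !conj1g.
- by rewrite !conjg_eq1.
Qed.

Local Notation Alt5 := ('Alt_('I_5))%G.

Lemma char_F5 : (5%:R = 0 :> 'F_5)%R.
Proof. exact: val_inj. Qed.

Lemma rho_unit s : rho 'F_5 s \in unitmx.
Proof.
have rho_inv : (rho 'F_5 s *m rho 'F_5 s^-1 = 1%:M)%R by rewrite -(rhoM char_F5) mulgV rho1.
exact: (mulmx1_unit rho_inv).1.
Qed.

Definition rhoG s : GL35 := mxGL (rho 'F_5 s).

Lemma rhoGM : {morph rhoG : s t / s * t}.
Proof. by move=> s t; rewrite /rhoG (rhoM char_F5) mxGLM ?rho_unit. Qed.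

Canonical rho_morphism := @Morphism _ _ [set: {perm 'I_5}] rhoG (in2W rhoGM).

Definition pt k : 'I_5 := inZp k.
Definition sA : {perm 'I_5} := tperm (pt 0) (pt 1) * tperm (pt 2) (pt 3).
Definition tA : {perm 'I_5} := tperm (pt 0) (pt 2) * tperm (pt 2) (pt 4).

Lemma sA_tA_relations : [/\ sA ^+ 2 = 1, tA ^+ 3 = 1 & (sA * tA) ^+ 5 = 1].
Proof.
by split; apply/permP => i; apply: val_inj; rewrite !expgS expg0 mulg1 !permM !permE;
  case: i => [[|[|[|[|[|i]]]]] Hi].
Qed.

Lemma sA_tA_nontrivial : [/\ sA != 1, tA != 1, sA * tA != 1 & sA * tA != tA * sA].
Proof. by split; apply/eqP => /permP/(_ (pt 0))/(congr1 val); rewrite !permM !permE. Qed.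

Lemma sA_Alt : sA \in Alt5. Proof. by rewrite Alt_even odd_permM !odd_tperm. Qed.
Lemma tA_Alt : tA \in Alt5. Proof. by rewrite Alt_even odd_permM !odd_tperm. Qed.

Lemma rhoG_sA : rhoG sA = gA.
Proof.
have rho_sA : cmx_of (rho 'F_5 sA) = cA by rewrite /cmx_of !mxE !permM !permE.
by rewrite /rhoG -[rho _ _]cmx_ofK rho_sA.
Qed.

Lemma rhoG_tA : rhoG tA = gB.
Proof.
have rho_tA : cmx_of (rho 'F_5 tA) = cB by rewrite /cmx_of !mxE !permM !permE.
by rewrite /rhoG -[rho _ _]cmx_ofK rho_tA.
Qed.

Lemma Alt5_simple : simple Alt5.
Proof. by apply: simple_Alt5; rewrite card_ord. Qed.

Lemma card_Alt5 : #|Alt5| = 60.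
Proof.
have := card_Alt (T := 'I_5); rewrite card_ord => /(_ isT) /eqP.
by rewrite -[(5`!)%N]/(2 * 60)%N eqn_pmul2l // => /eqP.
Qed.

Lemma Alt5_gen : <<[set sA; tA]>> = Alt5.
Proof.
pose P := <<[set sA; tA]>>%G; rewrite -[<<_>>]/(gval P).
have sPA : P \subset Alt5 by rewrite gen_subG subUset !sub1set sA_Alt tA_Alt.
have PsA : sA \in P by rewrite mem_gen // set21.
have PtA : tA \in P by rewrite mem_gen // set22.
have [sA2 tA3 sAtA5] := sA_tA_relations; have [ntsA nttA ntsAtA _] := sA_tA_nontrivial.
have d30 : (30 %| #|P|)%N.
  have := order_dvdG PsA; have := order_dvdG PtA; have := order_dvdG (groupM PsA PtA).
  rewrite (nt_prime_order _ sA2 ntsA) // (nt_prime_order _ tA3 nttA) //.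
  rewrite (nt_prime_order _ sAtA5 ntsAtA) // => d5 d3 d2.
  by rewrite (_ : 30 = lcmn 2 (lcmn 3 5))%N // !dvdn_lcm d2 d3 d5.
have idx12 : #|Alt5 : P| = 1%N \/ #|Alt5 : P| = 2.
  have := Lagrange sPA; have := dvdn_leq (cardG_gt0 P) d30; have := indexg_gt0 Alt5 P.
  rewrite card_Alt5; lia.
case: idx12 => [/(index1g sPA) // | /(index2_normal sPA) nPA].
have [_ /(_ _ nPA)[P1 | //]] := simpleP _ Alt5_simple.
by case/eqP: ntsA; move: PsA; rewrite P1 => /set1P.
Qed.

Lemma gA_neq1 : gA != 1.
Proof. by rewrite -gl_cmx_eqb gl_cmx_gA gl_cmx1. Qed.

Lemma rhoG_Alt_inj s : s \in Alt5 -> rhoG s = 1 -> s = 1.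
Proof.
move=> As rhos1.
have nK : Alt5 :&: 'ker rho_morphism <| Alt5 := normalGI (subsetT _) (ker_normal _).
have sK : s \in Alt5 :&: 'ker rho_morphism by rewrite inE As; apply/kerP; rewrite ?inE.
have [_ /(_ _ nK)[K1 | KA]] := simpleP _ Alt5_simple.
  by move: sK; rewrite K1 => /set1P.
have /setIP[_ /mker rhoG_sA1] : sA \in Alt5 :&: 'ker rho_morphism by rewrite KA sA_Alt.
by case/eqP: gA_neq1; rewrite -rhoG_sA -[rhoG sA]/(rho_morphism sA) rhoG_sA1.
Qed.

Lemma Alt5_center : 'Z(Alt5) = 1.
Proof.
have [_ /(_ _ (center_normal Alt5))[// | ZA]] := simpleP _ Alt5_simple.
have : sA \in 'Z(Alt5) by rewrite ZA sA_Alt.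
have [_ _ _ sA_tA_noncommute] := sA_tA_nontrivial.
by case/centerP => _ /(_ tA tA_Alt) /eqP; rewrite (negbTE sA_tA_noncommute).
Qed.

Lemma mx_of_cminus1 : mx_of cminus1 = (-1)%:M%R.
Proof.
apply/matrixP => i j; rewrite !mxE.
by case: i j => [[|[|[|i]]] Hi] [[|[|[|j]]] Hj]; apply: val_inj.
Qed.

Lemma minus1_central u : commute minus1 u.
Proof.
apply: gl_cmx_inj; rewrite !gl_cmxM gl_cmx_minus1 !cmul_mx mx_of_cminus1.
by rewrite scalar_mxC.
Qed.

Lemma minus1_2 : minus1 ^+ 2 = 1.
Proof. by apply: gl_cmx_inj; rewrite gl_cmxX gl_cmx_minus1 gl_cmx1. Qed.

Lemma minus1_neq1 : minus1 != 1.
Proof. by rewrite -gl_cmx_eqb gl_cmx_minus1 gl_cmx1. Qed.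

Definition phi (p : {perm 'I_5} * 'Z_2) : GL35 := rhoG p.1 * minus1 ^+ p.2.

Lemma phiM : {morph phi : p q / p * q}.
Proof.
move=> [s z] [t w]; rewrite /phi /= rhoGM.
have -> : minus1 ^+ (z * w)%g = minus1 ^+ z * minus1 ^+ w.
  by rewrite -expgD -[RHS](expg_mod _ minus1_2).
rewrite -!mulgA; congr (_ * _); rewrite !mulgA; congr (_ * _).
exact: commuteX z (commute_sym (minus1_central _)).
Qed.

Canonical phi_morphism := @Morphism _ _ A5xC2 phi (in2W phiM).

Lemma phi_ker p : p \in A5xC2 -> phi p = 1 -> p = 1.
Proof.
case: p => s z; rewrite in_setX => /andP[As _]; rewrite /phi /= => phi1.
have rhoGs : rhoG s = (minus1 ^+ z)^-1.
  by rewrite -[LHS]mulg1 -(mulgV (minus1 ^+ z)) mulgA phi1 mul1g.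
have : s \in 'Z(Alt5).
  apply/centerP; split=> // t At.
  apply/commgP/eqP; apply: rhoG_Alt_inj; first by rewrite groupR.
  rewrite -[rhoG _]/(rho_morphism _) morphR ?inE //= rhoGs.
  by apply/eqP/commgP/commute_sym/commuteV/commuteX/commute_sym/minus1_central.
rewrite Alt5_center => /set1P s1.
move: phi1 {rhoGs}; rewrite s1 -[rhoG 1]/(rho_morphism 1) morph1 mul1g.
case: z => [[|[|z]] lt_z2] // => [_ | /eqP]; last by rewrite expg1 (negbTE minus1_neq1).
by congr pair; apply: val_inj.
Qed.

Lemma injm_phi : 'injm phi_morphism.
Proof.
apply/subsetP => p Kp; rewrite inE; apply/eqP.
by apply: phi_ker (dom_ker Kp) (mker Kp).
Qed.

Definition G0 : {group GL35} := <<[set gA; gB; minus1]>>%G.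

Definition A5xC2_gens : {set {perm 'I_5} * 'Z_2} :=
  [set pairg1 _ sA; pairg1 _ tA; pair1g _ Zp1].

Lemma A5xC2_gens_sub : A5xC2_gens \subset A5xC2.
Proof. by rewrite !subUset !sub1set /pairg1 /pair1g !in_setX sA_Alt tA_Alt !group1 mem_Zp. Qed.

Lemma A5xC2_gen : A5xC2 :=: <<A5xC2_gens>>.
Proof.
apply/eqP; rewrite eqEsubset gen_subG A5xC2_gens_sub andbT.
rewrite /A5xC2 /= -setX_prod mul_subG //.
  rewrite -morphim_pairg1 -Alt5_gen morphim_gen ?subsetT // genS //.
  by rewrite morphimEsub ?subsetT // imsetU1 imset_set1 subUset !sub1set !inE !eqxx ?orbT.
have -> : Zp 2 = <[Zp1 : 'Z_2]> by rewrite /Zp Zp_cycle.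
rewrite -morphim_pair1g morphim_cycle ?inE // cycle_subG.
by rewrite mem_gen // !inE eqxx ?orbT.
Qed.

Lemma morphim_gen3 (aT rT : finGroupType) (D : {group aT}) (f : {morphism D >-> rT}) a b c :
  a \in D -> b \in D -> c \in D -> f @* <<[set a; b; c]>> = <<[set f a; f b; f c]>>.
Proof.
move=> Da Db Dc; have sD : [set a; b; c] \subset D by rewrite !subUset !sub1set Da Db Dc.
by rewrite morphim_gen // morphimEsub // !imsetU !imset_set1.
Qed.

Lemma A5xC2_gens_in : [/\ pairg1 _ sA \in A5xC2, pairg1 _ tA \in A5xC2 & pair1g _ Zp1 \in A5xC2].
Proof.
by have := A5xC2_gens_sub; rewrite !subUset !sub1set => /andP[/andP[-> ->] ->].
Qed.

Lemma phi_gens :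
  [/\ phi (pairg1 _ sA) = gA, phi (pairg1 _ tA) = gB & phi (pair1g _ Zp1) = minus1].
Proof.
split; rewrite /phi /pairg1 /pair1g [(_, _).1]/= [(_, _).2]/=.
- by rewrite expg0 mulg1 rhoG_sA.
- by rewrite expg0 mulg1 rhoG_tA.
by rewrite (morph1 rho_morphism) mul1g expg1.
Qed.

Lemma phi_image : phi_morphism @* A5xC2 = G0.
Proof.
have [Dsa Dta Dc] := A5xC2_gens_in; have [phi_sa phi_ta phi_c] := phi_gens.
by rewrite [X in _ @* X]A5xC2_gen morphim_gen3 //= phi_sa phi_ta phi_c.
Qed.

Lemma G0_isog : G0 \isog A5xC2.
Proof. by rewrite isog_sym -phi_image sub_isog ?injm_phi. Qed.

Local Notation sa := (pairg1 'Z_2 sA).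
Local Notation ta := (pairg1 'Z_2 tA).
Local Notation c2 := (pair1g {perm 'I_5} (Zp1 : 'Z_2)).

Lemma A5xC2_relations :
  [/\ sa ^+ 2 = 1, ta ^+ 3 = 1, (sa * ta) ^+ 5 = 1, c2 ^+ 2 = 1
    & [/\ sa != 1, ta != 1, c2 != 1, commute c2 sa & commute c2 ta]].
Proof.
have Zp1_2 : (Zp1 : 'Z_2) ^+ 2 = 1 by apply: val_inj.
have c2_central x : commute c2 (pairg1 'Z_2 x).
  by rewrite /commute /pairg1 /pair1g {1 2}/mulg /= /mul_pair /= !mulg1 !mul1g.
have [sA2 tA3 sAtA5] := sA_tA_relations; have [ntsA nttA _ _] := sA_tA_nontrivial.
rewrite -!morphX ?inE // -morphM ?inE // -morphX ?inE // sA2 tA3 sAtA5 Zp1_2 !morph1.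
by rewrite !morph_injm_eq1 ?injm_pairg1 ?injm_pair1g ?inE.
Qed.

Lemma embedding_conj_G0 (f : {morphism A5xC2 >-> GL35}) :
  'injm f -> exists x, f @* A5xC2 :^ x = G0.
Proof.
move=> injf; have [Dsa Dta Dc] := A5xC2_gens_in.
have [sa2 ta3 sata5 c2_2 [nt_sa nt_ta nt_c2 c2sa c2ta]] := A5xC2_relations.
have fX p n : p \in A5xC2 -> p ^+ n = 1 -> f p ^+ n = 1.
  by move=> Dp pn1; rewrite -morphX // pn1 morph1.
have f_nt p : p \in A5xC2 -> p != 1 -> f p != 1 by move=> Dp; rewrite morph_injm_eq1.
have f_comm p : p \in A5xC2 -> commute c2 p -> commute (f c2) (f p).
  by move=> Dp cp; rewrite /commute -!morphM // cp.
have fsata5 : (f sa * f ta) ^+ 5 = 1 by rewrite -morphM // fX ?groupM.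
have [x [Ax Bx Zx]] := std_generators_conj (fX _ _ Dsa sa2) (f_nt _ Dsa nt_sa)
  (fX _ _ Dta ta3) (f_nt _ Dta nt_ta) fsata5 (fX _ _ Dc c2_2) (f_nt _ Dc nt_c2)
  (f_comm _ Dsa c2sa) (f_comm _ Dta c2ta).
exists x; rewrite [X in f @* X]A5xC2_gen morphim_gen3 // -genJ !conjUg !conjg_set1.
by rewrite Ax Bx Zx.
Qed.

Theorem lemma3p17 :
  exists G : {group {'GL_3['F_5]}},
    (G \isog A5xC2)%g /\
    forall H : {group {'GL_3['F_5]}},
      (H \isog A5xC2)%g -> exists2 x, x \in ('GL_3['F_5])%g & H :=: (G :^ x)%g.
Proof.
exists G0; split; first exact: G0_isog.
move=> H; rewrite isog_sym => /isogP[f injf fH].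
have [x fx] := embedding_conj_G0 injf.
by exists x^-1; rewrite ?inE // -fH -fx conjsgK.
Qed.
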